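(* Let $0<p<2$, let $G=(V,E)$ be a graph with $V=\{1,\dots,n\}$, and let $c$ be a real number. Consider the optimization problem $\tilde{F}_{BS}^{p}$ in the variables of a symmetric matrix $Z=[z_{ij}]_{i,j=1}^n$: $$\min \ \frac{1}{2^{p/2}}\sum_{\{i,j\}\in E} z_{ij}^{p/2}$$ subject to $$z_{ij}^{p/2}+z_{jk}^{p/2}\ge z_{ik}^{p/2}\quad \forall i,j,k,\qquad \sum_{i<j} z_{ij}\ge c(1-c)n^2,\qquad z_{ii}=0\ \ \forall i,\qquad \mathbf{1}-Z\succeq 0,$$ where $\mathbf{1}$ is the $n\times n$ matrix with all entries equal to $1$. Then $\tilde{F}_{BS}^{p}$ is a concave program: its objective function is concave and its feasible set is convex.
   Context: A concave program is an optimization problem of the form $\min_{x\in C} f(x)$ where $C\subseteq\mathbb{R}^d$ is a convex set and $f$ is a concave function (i.e. $f(\lambda x+(1-\lambda)y)\ge \lambda f(x)+(1-\lambda)f(y)$ for all $x,y$ in its convex domain and $\lambda\in[0,1]$). The variables $z_{ij}$ are understood to be nonnegative reals, so that $z^{p/2}$ is defined; $M\succeq 0$ means $M$ is positive semidefinite. *)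

From mathcomp Require Import all_boot all_order all_algebra.
From mathcomp Require Import reals exp.
Set Implicit Arguments. Unset Strict Implicit. Unset Printing Implicit Defensive.
Import Order.TTheory GRing.Theory Num.Theory.
Local Open Scope ring_scope.

Section BS.
Variables (R : realType) (n : nat).

(* Natural domain of the variables: symmetric matrices with nonnegative entries
   (z_ij are nonnegative reals so that z^(p/2) is defined). *)
Definition bs_domain (Z : 'M[R]_n) : Prop :=
  Z^T = Z /\ (forall i j, 0 <= Z i j).

Definition psdmx (M : 'M[R]_n) : Prop :=
  forall x : 'cV[R]_n, 0 <= (x^T *m M *m x) 0 0.

Definition ones_mx : 'M[R]_n := const_mx 1.

(* Objective  2^{-p/2} * sum_{ {i,j} in E } z_ij^{p/2};  each unordered edge
   {i,j} (i < j) counted once. *)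
Definition bs_objective (p : R) (E : rel 'I_n) (Z : 'M[R]_n) : R :=
  (2 `^ (p / 2))^-1 *
    \sum_(i : 'I_n) \sum_(j : 'I_n | (i < j)%N && E i j) Z i j `^ (p / 2).

Definition bs_feasible (p c : R) (Z : 'M[R]_n) : Prop :=
  [/\ bs_domain Z,
      (forall i j k : 'I_n, Z i k `^ (p / 2) <= Z i j `^ (p / 2) + Z j k `^ (p / 2)),
      c * (1 - c) * (n%:R) ^+ 2 <= \sum_(i : 'I_n) \sum_(j : 'I_n | (i < j)%N) Z i j,
      (forall i, Z i i = 0)
    & psdmx (ones_mx - Z)].

End BS.

Definition convex_set_mx (R : realType) (n : nat) (C : 'M[R]_n -> Prop) : Prop :=
  forall (X Y : 'M[R]_n) (l : R), C X -> C Y -> 0 <= l <= 1 ->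
    C (l *: X + (1 - l) *: Y).

Definition concave_on_mx (R : realType) (n : nat) (D : 'M[R]_n -> Prop)
  (f : 'M[R]_n -> R) : Prop :=
  forall (X Y : 'M[R]_n) (l : R), D X -> D Y -> 0 <= l <= 1 ->
    l * f X + (1 - l) * f Y <= f (l *: X + (1 - l) *: Y).

(* For [0 < q < 1] the set of nonnegative triples [(a, b, c)] with
   [c^q <= a^q + b^q] is a convex cone: it is clearly closed under scaling, and
   closure under addition follows from the concavity of [x |-> x^q] applied
   with the weights [t = c1 / (c1 + c2)] and [1 - t].  Hence the triangle
   constraints are preserved by convex combinations; the remaining constraints
   are linear or a positive semidefiniteness condition, and the objective is a
   nonnegative combination of the concave functions [z |-> z^(p/2)]. *)
From mathcomp Require Import all_boot all_order all_algebra.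
From mathcomp Require Import classical_sets interval_inference.
From mathcomp Require Import reals exp convex hoelder ring.
Set Implicit Arguments. Unset Strict Implicit. Unset Printing Implicit Defensive.
Import Order.TTheory GRing.Theory Num.Theory.
Local Open Scope ring_scope.

Section PowRConcavity.
Variable R : realType.
Implicit Types q t a b : R.

Lemma concave_powR q t a b : 0 < q <= 1 -> 0 <= a -> 0 <= b -> 0 <= t <= 1 ->
  t * a `^ q + (1 - t) * b `^ q <= (t * a + (1 - t) * b) `^ q.
Proof.
move=> /andP[q0 q1] a0 b0 /andP[t0 t1].
have iq1 : 1 <= q^-1 by rewrite invf_ge1.
have := @convex_powR R _ iq1 (Itv01 t0 t1) (a `^ q) (b `^ q).
rewrite !inE /= !in_itv /= !andbT !powR_ge0 => /(_ isT isT) /= cvx.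
have {cvx} : (t * a `^ q + (1 - t) * b `^ q) `^ q^-1 <= t * a + (1 - t) * b.
  by move: cvx; rewrite -!powRrM !mulfV ?gt_eqF // !powRr1.
move/(@ge0_ler_powR R q (ltW q0)).
rewrite -powRrM mulVf ?gt_eqF // powRr1 ?addr_ge0 ?mulr_ge0 ?powR_ge0 ?subr_ge0 //.
by apply; rewrite nnegrE ?addr_ge0 ?mulr_ge0 ?powR_ge0 ?subr_ge0.
Qed.

Lemma powR_mulK q t a : 0 <= t -> 0 <= a -> t `^ (1 - q) * (t * a) `^ q = t * a `^ q.
Proof.
move=> t0 a0; rewrite powRM // mulrA -powRD; last by rewrite subrK oner_eq0.
by rewrite subrK powRr1.
Qed.

Lemma ler_powR q a b : 0 < q -> 0 <= a -> a <= b -> a `^ q <= b `^ q.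
Proof.
move=> q0 a0 ab.
by apply: ge0_ler_powR; rewrite ?nnegrE ?(ltW q0) ?(le_trans a0 ab).
Qed.

(* Concavity in the form [t (a/t)^q + (1-t) (b/(1-t))^q <= (a + b)^q]. *)
Lemma weighted_powR_le_powRD q t a b : 0 < q < 1 -> 0 <= a -> 0 <= b ->
  0 <= t <= 1 -> t `^ (1 - q) * a `^ q + (1 - t) `^ (1 - q) * b `^ q <= (a + b) `^ q.
Proof.
move=> /andP[q0 q1] a0 b0 /andP[t0 t1].
have q1_neq0 : 1 - q != 0 by rewrite subr_eq0 eq_sym lt_eqF.
have [->|tn0] := eqVneq t 0.
  by rewrite powR0 // mul0r add0r subr0 powR1 mul1r ler_powR // lerDr.
have [->|tn1] := eqVneq t 1.
  by rewrite subrr powR0 // mul0r addr0 powR1 mul1r ler_powR // lerDl.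
have tp : 0 < t by rewrite lt_neqAle eq_sym tn0.
have t'p : 0 < 1 - t by rewrite subr_gt0 lt_neqAle tn1.
have ea : a = t * (a / t) by rewrite mulrC divfK ?gt_eqF.
have eb : b = (1 - t) * (b / (1 - t)) by rewrite mulrC divfK ?gt_eqF.
have a'0 : 0 <= a / t by rewrite divr_ge0 // ltW.
have b'0 : 0 <= b / (1 - t) by rewrite divr_ge0 // ltW.
have := @concave_powR q t (a / t) (b / (1 - t)).
rewrite q0 ltW // t0 t1 -ea -eb => /(_ isT a'0 b'0 isT).
by apply: le_trans; rewrite {1}ea {1}eb !powR_mulK // ltW.
Qed.

Lemma powR_triangleD q a1 a2 b1 b2 c1 c2 : 0 < q < 1 ->
  0 <= a1 -> 0 <= a2 -> 0 <= b1 -> 0 <= b2 -> 0 <= c1 -> 0 <= c2 ->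
  c1 `^ q <= a1 `^ q + b1 `^ q -> c2 `^ q <= a2 `^ q + b2 `^ q ->
  (c1 + c2) `^ q <= (a1 + a2) `^ q + (b1 + b2) `^ q.
Proof.
move=> q01 a10 a20 b10 b20 c10 c20 h1 h2; have /andP[q0 _] := q01.
set C := c1 + c2.
have [C0|Cn0] := eqVneq C 0.
  by rewrite C0 powR0 ?gt_eqF // addr_ge0 // powR_ge0.
have Cp : 0 < C by rewrite lt_neqAle eq_sym Cn0 addr_ge0.
set t := c1 / C.
have t01 : 0 <= t <= 1 by rewrite /t divr_ge0 ?(ltW Cp) //= ler_pdivrMr // mul1r lerDl.
have ec1 : c1 = t * C by rewrite /t divfK ?gt_eqF.
have ec2 : c2 = (1 - t) * C by rewrite mulrBl mul1r -ec1 /C addrC addKr.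
have splitC : C `^ q = t `^ (1 - q) * c1 `^ q + (1 - t) `^ (1 - q) * c2 `^ q.
  have /andP[t0 t1] := t01; have C0 := ltW Cp.
  rewrite ec1 ec2 !powR_mulK ?subr_ge0 //.
  by rewrite -mulrDl subrKC mul1r.
rewrite splitC.
apply: le_trans (lerD (weighted_powR_le_powRD q01 a10 a20 t01)
                      (weighted_powR_le_powRD q01 b10 b20 t01)).
rewrite addrACA -!mulrDr.
by apply: lerD; apply: ler_wpM2l => //; apply: powR_ge0.
Qed.

Lemma powR_triangleZ q l a b c : 0 <= l -> 0 <= a -> 0 <= b -> 0 <= c ->
  c `^ q <= a `^ q + b `^ q -> (l * c) `^ q <= (l * a) `^ q + (l * b) `^ q.
Proof.
move=> l0 a0 b0 c0 h; rewrite !powRM // -mulrDr.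
by apply: ler_wpM2l => //; apply: powR_ge0.
Qed.

Lemma powR_triangle_convex q l a1 a2 b1 b2 c1 c2 : 0 < q < 1 -> 0 <= l <= 1 ->
  0 <= a1 -> 0 <= a2 -> 0 <= b1 -> 0 <= b2 -> 0 <= c1 -> 0 <= c2 ->
  c1 `^ q <= a1 `^ q + b1 `^ q -> c2 `^ q <= a2 `^ q + b2 `^ q ->
  (l * c1 + (1 - l) * c2) `^ q <=
    (l * a1 + (1 - l) * a2) `^ q + (l * b1 + (1 - l) * b2) `^ q.
Proof.
move=> q01 /andP[l0 l1] a10 a20 b10 b20 c10 c20 h1 h2.
have l'0 : 0 <= 1 - l by rewrite subr_ge0.
by apply: powR_triangleD; rewrite ?mulr_ge0 //; apply: powR_triangleZ.
Qed.

End PowRConcavity.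

Section BSConvexity.
Variables (R : realType) (n : nat).
Implicit Types (X Y : 'M[R]_n) (l : R).

Lemma sum2_mix (I J : finType) (P : I -> J -> bool) l (F G : I -> J -> R) :
  \sum_i \sum_(j | P i j) (l * F i j + (1 - l) * G i j) =
  l * \sum_i \sum_(j | P i j) F i j + (1 - l) * \sum_i \sum_(j | P i j) G i j.
Proof.
rewrite !mulr_sumr -big_split /=; apply: eq_bigr => i _.
by rewrite !mulr_sumr -big_split.
Qed.

Lemma bs_domain_convex : convex_set_mx (@bs_domain R n).
Proof.
move=> X Y l [XT X0] [YT Y0] /andP[l0 l1]; split.
  by rewrite linearD !linearZ /= XT YT.
by move=> i j; rewrite !mxE addr_ge0 // mulr_ge0 // subr_ge0.
Qed.

Lemma psdmx_convex : convex_set_mx (@psdmx R n).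
Proof.
move=> X Y l PX PY /andP[l0 l1] x.
move: (PX x) (PY x); rewrite mulmxDr mulmxDl -!scalemxAr -!scalemxAl !mxE.
by move=> PXx PYx; rewrite addr_ge0 // mulr_ge0 // subr_ge0.
Qed.

Lemma ones_mx_subr_mix X Y l :
  ones_mx R n - (l *: X + (1 - l) *: Y) =
  l *: (ones_mx R n - X) + (1 - l) *: (ones_mx R n - Y).
Proof. by apply/matrixP => i j; rewrite /ones_mx !mxE; ring. Qed.

Lemma bs_objective_concave p (E : rel 'I_n) : 0 < p -> p <= 2 ->
  concave_on_mx (@bs_domain R n) (bs_objective p E).
Proof.
move=> p0 p2 X Y l [_ X0] [_ Y0] l01; rewrite /bs_objective.
have q01 : 0 < p / 2 <= 1 by rewrite divr_gt0 // ler_pdivrMr // mul1r.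
rewrite mulrCA [(1 - l) * _]mulrCA -mulrDr.
apply: ler_wpM2l; first by rewrite invr_ge0 powR_ge0.
rewrite -(sum2_mix _ l (fun i j => X i j `^ (p / 2)) (fun i j => Y i j `^ (p / 2))).
by apply: ler_sum => i _; apply: ler_sum => j _; rewrite !mxE concave_powR.
Qed.

Lemma bs_feasible_convex p c : 0 < p -> p < 2 -> convex_set_mx (@bs_feasible R n p c).
Proof.
move=> p0 p2 X Y l [dX triX sumX diagX psdX] [dY triY sumY diagY psdY] l01.
have q01 : 0 < p / 2 < 1 by rewrite divr_gt0 // ltr_pdivrMr // mul1r.
have /andP[l0 l1] := l01; have l'0 : 0 <= 1 - l by rewrite subr_ge0.
case: (dX) => _ X0; case: (dY) => _ Y0.
split.
- exact: bs_domain_convex.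
- by move=> i j k; rewrite !mxE powR_triangle_convex.
- under eq_bigr => i _ do under eq_bigr => j _ do rewrite !mxE.
  rewrite (sum2_mix (fun i j : 'I_n => (i < j)%N) l (fun i j => X i j) (fun i j => Y i j)).
  apply: le_trans (lerD (ler_wpM2l l0 sumX) (ler_wpM2l l'0 sumY)).
  by rewrite -mulrDl subrKC mul1r.
- by move=> i; rewrite !mxE diagX diagY !mulr0 addr0.
- by rewrite ones_mx_subr_mix; apply: psdmx_convex.
Qed.

End BSConvexity.

Theorem mainTheorem1 (R : realType) (n : nat) (E : rel 'I_n)
  (E_sym : symmetric E) (E_irr : irreflexive E) (p c : R)
  (hp0 : 0 < p) (hp2 : p < 2) :
  [/\ convex_set_mx (@bs_domain R n),
      concave_on_mx (@bs_domain R n) (bs_objective p E)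
    & convex_set_mx (@bs_feasible R n p c)].
Proof.
split; first exact: bs_domain_convex.
  exact: bs_objective_concave hp0 (ltW hp2).
exact: bs_feasible_convex.
Qed.
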